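(* Let $\mathcal{M}$ be a connected simplicial $2$-manifold (possibly with boundary) that is not a checkered polygon triangulation. Then $\mathcal{M}$ has a topological unfolding that is not checkered.
   Context: A simplicial $2$-manifold is a finite $2$-dimensional simplicial complex homeomorphic to a $2$-manifold, possibly with boundary; its triangles are called facets. The weak dual $\mathcal{M}^*$ is the graph with a node for each facet and an arc between two facets sharing an edge (for a simplicial complex this is a simple graph). For a spanning tree $T^*$ of $\mathcal{M}^*$, the topological unfolding determined by $T^*$ is the complex obtained from disjoint copies of the facets of $\mathcal{M}$ by gluing two facets along their common edge exactly when they are joined by an arc of $T^*$; it is a triangulated polygon with no interior vertices (a complex homeomorphic to a closed disk with all vertices on the boundary). A polygon triangulation (triangulated polygon with no interior vertices) is checkered if there is a coloring of its triangles black and white such that triangles sharing an edge receive different colors and every white triangle shares an edge with exactly three triangles. *)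

From mathcomp Require Import all_boot.
Set Implicit Arguments. Unset Strict Implicit. Unset Printing Implicit Defensive.

Section Defs.
Variable V : finType.

(* A pure 2-dimensional simplicial complex is given by its set F of facets
   (triangles = 3-element sets of vertices); the complex is the downward closure. *)

Definition verts (F : {set {set V}}) : {set V} := \bigcup_(f in F) f.

Definition edges (F : {set {set V}}) : {set {set V}} :=
  [set e : {set V} | (#|e| == 2) && [exists f in F, e \subset f]].

Definition facet_deg (F : {set {set V}}) (e : {set V}) : nat :=
  #|[set f in F | e \subset f]|.

Definition boundary_edge (F : {set {set V}}) (e : {set V}) : bool :=
  (e \in edges F) && (facet_deg F e == 1).

Definition link_verts (F : {set {set V}}) (v : V) : {set V} :=
  [set x | (x != v) && [exists f in F, (v \in f) && (x \in f)]].
Definition link_rel (F : {set {set V}}) (v : V) : rel V :=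
  fun x y => [set v; x; y] \in F.

(* Combinatorial simplicial 2-manifold (possibly with boundary):
   nonempty, pure 2-dimensional, every edge in at most two triangles,
   and the link of every vertex is connected (hence a path or a cycle). *)
Definition simplicial_2manifold (F : {set {set V}}) : Prop :=
  [/\ F != set0,
      (forall f, f \in F -> #|f| = 3),
      (forall e : {set V}, #|e| = 2 -> facet_deg F e <= 2)
    & (forall v x y, x \in link_verts F v -> y \in link_verts F v ->
          connect (link_rel F v) x y)].

(* topological connectedness = connectedness of the 1-skeleton *)
Definition sc_connected (F : {set {set V}}) : Prop :=
  forall u w, u \in verts F -> w \in verts F ->
    connect (fun x y => [exists f in F, (x \in f) && (y \in f)]) u w.

(* Triangulated polygon with no interior vertices: a connected simplicial
   2-manifold homeomorphic to a closed disk (Euler characteristic 1, with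
   nonempty boundary; by the classification of surfaces) with every vertex on
   the boundary. *)
Definition polygon_triangulation (F : {set {set V}}) : Prop :=
  [/\ simplicial_2manifold F, sc_connected F,
      (forall v, v \in verts F ->
          exists2 e, boundary_edge F e & v \in e)
    & #|verts F| + #|F| = #|edges F| + 1].

(* adjacency of facets in M (sharing an edge) = arcs of the weak dual M^* *)
Definition adjM (F : {set {set V}}) : rel {set V} :=
  fun f g => (f != g) && (#|f :&: g| == 2).

Definition spanning_tree (F : {set {set V}}) (T : {set {set {set V}}}) : Prop :=
  [/\ (forall A, A \in T ->
         exists f g, [/\ f \in F, g \in F, adjM F f g & A = [set f; g]]),
      (forall f g, f \in F -> g \in F ->
         connect (fun x y => [set x; y] \in T) f g)
    & #|T| = #|F| - 1].

(* Topological unfolding along T: disjoint copies of the facets (the copy of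
   facet f is tagged by f); the copy-edge (f,e) (e a 2-subset of f) is glued to
   the copy-edge (g,e) when {f,g} is an arc of T and e lies in both.  Edge
   classes of the unfolding = equivalence classes of this gluing. *)
Definition glue (T : {set {set {set V}}}) : rel ({set V} * {set V}) :=
  fun p q => [&& p.2 == q.2, [set p.1; q.1] \in T,
                 p.2 \subset p.1 & p.2 \subset q.1].

Definition unf_share (T : {set {set {set V}}}) : rel {set V} :=
  fun f g => (f != g) &&
    [exists e1 : {set V}, exists e2 : {set V},
      [&& #|e1| == 2, #|e2| == 2, e1 \subset f, e2 \subset g &
          connect (glue T) (f, e1) (g, e2)]].

(* checkered w.r.t. the edge-sharing relation adj on the triangles F:
   a black/white colouring (true = white) such that triangles sharing an edge
   get different colours and every white triangle shares an edge with exactly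
   three triangles. *)
Definition checkered (F : {set {set V}}) (adj : rel {set V}) : Prop :=
  exists c : {set V} -> bool,
    (forall f g, f \in F -> g \in F -> adj f g -> c f != c g) /\
    (forall f, f \in F -> c f -> #|[set g in F | adj f g]| = 3).

End Defs.

From mathcomp Require Import all_boot zify.
From Stdlib Require Import Classical.
Set Implicit Arguments. Unset Strict Implicit. Unset Printing Implicit Defensive.

(* Since an edge of M lies in at most two facets, the gluings of the unfolding along T* are
   exactly the arcs of T*, so the unfolding is checkered iff the tree T* is.

   If some arc ab of M* is missing from a spanning tree, root the tree at a, let v be the
   child of a on the way to b, and exchange the arc va for ab.  In a checkered colouring of
   the first tree, a has at most two tree neighbours, so a is black and v white, while a
   deepest leaf l below v is black; in one of the second tree, v and l are both black.  Both
   colourings alternate along the tree path from l to v, which is impossible, so one of the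
   two trees is not checkered.

   Otherwise M* is itself a tree, so M has #F - 1 interior edges.  Counting incidences
   (3F = E + I, each vertex star has at most one more edge than facets, and the 1-skeleton
   has at most F + 2 vertices) forces E = 2F + 1, V = F + 2, and at every vertex a boundary
   edge.  So M is a polygon triangulation with the same adjacency as its unfolding, and cannot
   be checkered. *)

Lemma connect_invariant (T : finType) (e : rel T) (P : T -> Prop) x y :
  P x -> (forall a b, P a -> e a b -> P b) -> connect e x y -> P y.
Proof.
move=> Px step /connectP[s + ->]; elim: s x Px => [|z s IHs] x Px //= /andP[exz].
exact: IHs (step _ _ Px exz).
Qed.

Lemma connect_exit (T : finType) (e : rel T) (S : {set T}) x y :
  connect e x y -> x \in S -> y \notin S -> exists a b, [/\ a \in S, b \notin S & e a b].
Proof.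
move=> /connectP[s + ->]; elim: s x => [|z s IHs] x /=; first by move=> _ ->.
case/andP=> exz zs xS yS; case: (boolP (z \in S)) => zS; first exact: IHs zs zS yS.
by exists x, z.
Qed.

Lemma measure_ind (T : Type) (m : T -> nat) (P : T -> Prop) :
  (forall x, (forall y, m y < m x -> P y) -> P x) -> forall x, P x.
Proof.
move=> IH x; have [n] := ubnP (m x); elim: n x => // n IHn x /ltnSE mx.
by apply: IH => y my; apply: IHn; apply: leq_trans mx.
Qed.

Lemma connected_set_ind (T : finType) (X : {set T}) (R : rel T) (P : {set T} -> Prop) x0 :
  x0 \in X -> (forall y, y \in X -> connect R x0 y) ->
  (forall a b, a \in X -> R a b -> b \in X) -> P [set x0] ->
  (forall (S : {set T}) a b, S \subset X -> x0 \in S -> a \in S -> b \in X -> b \notin S ->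
     R a b -> P S -> P (b |: S)) ->
  P X.
Proof.
move=> x0X conn closed P0 step.
suff grow n S : #|X :\: S| = n -> S \subset X -> x0 \in S -> P S -> P X.
  by apply: (grow _ [set x0] erefl); rewrite ?sub1set ?set11.
elim: n S => [|n IHn] S XSn SX x0S PS.
  suff -> : X = S by [].
  by apply/eqP; rewrite eqEsubset SX andbT -setD_eq0 -cards_eq0 XSn.
have /set0Pn[y] : X :\: S != set0 by rewrite -cards_eq0 XSn.
rewrite inE => /andP[yS yX].
have [a [b [aS bS Rab]]] := connect_exit (conn y yX) x0S yS.
have bX : b \in X by apply: closed Rab; apply: (subsetP SX).
apply: (IHn (b |: S)); last exact: step Rab PS.
- by move: XSn; rewrite setUC -setDDl (cardsD1 b (X :\: S)) !inE bS bX => -[].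
- by rewrite subUset sub1set bX.
- by rewrite !inE x0S orbT.
Qed.

Lemma double_count (X Y : finType) (A : {set X}) (B : {set Y}) (R : X -> Y -> bool) :
  \sum_(x in A) #|[set y in B | R x y]| = \sum_(y in B) #|[set x in A | R x y]|.
Proof.
transitivity (\sum_(x in A) \sum_(y in B | R x y) 1).
  by apply: eq_bigr => x _; rewrite sum1dep_card.
rewrite (exchange_big_dep (mem B)) /=; last by move=> x y _ /andP[].
by apply: eq_bigr => y yB; rewrite sum1dep_card; apply: eq_card => x; rewrite !inE yB.
Qed.

Lemma set2_eq_cases (T : finType) (x y a b : T) : [set x; y] = [set a; b] -> a != b ->
  (x = a /\ y = b) \/ (x = b /\ y = a).
Proof.
move=> E.
have /set2P[-> | ->] : a \in [set x; y] by rewrite E set21.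
all: have /set2P[-> | ->] : b \in [set x; y] by rewrite E set22.
all: rewrite ?eqxx // => _; by [left | right].
Qed.

Lemma card3_distinct (T : finType) (x y z : T) : #|[set x; y; z]| = 3 ->
  [/\ x != y, y != z & x != z].
Proof.
rewrite setUC cardsU1 cards2 !inE negb_or => card3.
have /and3P[xy zx zy] : [&& x != y, z != x & z != y].
  by move: card3; case: (x != y); case: (z != x); case: (z != y).
by split; rewrite // eq_sym.
Qed.

Lemma exists_other (T : finType) (A : {set T}) v : 1 < #|A| -> exists2 x, x \in A & x != v.
Proof.
rewrite (cardsD1 v) => A2; have /set0Pn[x] : A :\ v != set0.
  by rewrite -card_gt0; move: A2; case: (v \in A) => /=; lia.
by rewrite !inE => /andP[xv xA]; exists x.
Qed.

Lemma card2_set2_of_mem (T : finType) (e : {set T}) v : #|e| = 2 -> v \in e ->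
  exists2 x, x != v & e = [set v; x].
Proof.
move/eqP/cards2P=> [x [y [xy ->]]] /set2P[-> | ->]; first by exists y; rewrite // eq_sym.
by exists x; rewrite // setUC.
Qed.

(** * Facets and the weak dual *)

Section Facets.
Variables (V : finType) (F : {set {set V}}).
Hypothesis facet3 : forall f, f \in F -> #|f| = 3.
Hypothesis facet_deg_le2 : forall e : {set V}, #|e| = 2 -> facet_deg F e <= 2.

Lemma adjM_sym : symmetric (adjM F).
Proof. by move=> f g; rewrite /adjM eq_sym setIC. Qed.

Lemma edgesP (e : {set V}) : reflect (#|e| = 2 /\ exists2 f, f \in F & e \subset f) (e \in edges F).
Proof.
rewrite inE; apply: (iffP andP) => [[/eqP e2 /exists_inP[f fF ef]] | [e2 [f fF ef]]].
  by split=> //; exists f.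
by rewrite e2; split=> //; apply/exists_inP; exists f.
Qed.

Lemma facet_deg_gt0 (e : {set V}) : e \in edges F -> 0 < facet_deg F e.
Proof. by case/edgesP=> _ [f fF ef]; rewrite card_gt0; apply/set0Pn; exists f; rewrite inE fF. Qed.

Lemma card_facetI_le2 f g : f \in F -> g \in F -> f != g -> #|f :&: g| <= 2.
Proof.
move=> fF gF; apply: contraNT; rewrite -ltnNge => fg3.
have fgf : f :&: g = f by apply/eqP; rewrite eqEcard subsetIl facet3.
have fgg : f :&: g = g by apply/eqP; rewrite eqEcard subsetIr facet3.
by rewrite -{1}fgf fgg.
Qed.

Lemma adjM_common_pair f g x y : f \in F -> g \in F -> x != y ->
  x \in f -> y \in f -> x \in g -> y \in g -> f = g \/ adjM F f g.
Proof.
move=> fF gF xy xf yf xg yg; case: (eqVneq f g) => [-> | fg]; [by left | right].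
rewrite /adjM fg eqn_leq card_facetI_le2 //=.
have : [set x; y] \subset f :&: g by rewrite subUset !sub1set !inE xf yf xg yg.
by move/subset_leq_card; rewrite cards2 xy.
Qed.

Lemma facets_on_edge_eq (e : {set V}) f g h : #|e| = 2 ->
  f \in F -> g \in F -> h \in F -> e \subset f -> e \subset g -> e \subset h ->
  f != g -> g != h -> f = h.
Proof.
move=> e2 fF gF hF ef eg eh fg gh; apply/eqP; apply: contraT => fh.
have : #|[set f; g; h]| <= facet_deg F e.
  by apply: subset_leq_card; rewrite !subUset !sub1set !inE fF gF hF ef eg eh.
rewrite setUC cardsU1 cards2 !inE negb_or eq_sym fh eq_sym gh fg.
by move/leq_trans/(_ (facet_deg_le2 e2)).
Qed.

Definition dual_nbrs (f : {set V}) : {set {set V}} := [set g in F | adjM F f g].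

(* [g |-> f :&: g] maps the neighbours of [f] injectively to the 2-subsets of [f]. *)
Lemma card_dual_nbrs_le3 f : f \in F -> #|dual_nbrs f| <= 3.
Proof.
move=> fF; rewrite -[3]/'C(3, 2) -(facet3 fF) -cards_draws.
rewrite -(@card_in_imset _ _ (setI f) (dual_nbrs f)); last first.
  move=> g h; rewrite /dual_nbrs /adjM !inE.
  move=> /andP[gF /andP[fg /eqP fg2]] /andP[hF /andP[fh _]] fgh.
  apply: (facets_on_edge_eq fg2 gF fF hF) => //; rewrite ?subsetIr ?subsetIl //.
    by rewrite fgh subsetIr.
  by rewrite eq_sym.
apply: subset_leq_card; apply/subsetP => _ /imsetP[g + ->].
by rewrite /dual_nbrs !inE subsetIl => /andP[_ /andP[_ ->]].
Qed.

Lemma card_adj_le2 (adj : rel {set V}) x y : x \in F -> (forall g, adj x g -> adjM F x g) ->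
  y \in F -> adjM F x y -> ~~ adj x y -> #|[set g in F | adj x g]| <= 2.
Proof.
move=> xF adjM_of_adj yF xy nxy.
have : [set g in F | adj x g] \subset dual_nbrs x :\ y.
  apply/subsetP => g; rewrite /dual_nbrs !inE => /andP[gF xg]; rewrite gF adjM_of_adj // !andbT.
  by apply: contraNneq nxy => <-.
move/subset_leq_card/leq_trans; apply.
by have := card_dual_nbrs_le3 xF; rewrite (cardsD1 y) !inE yF xy.
Qed.

End Facets.

Lemma mem_verts (V : finType) (F : {set {set V}}) f x : f \in F -> x \in f -> x \in verts F.
Proof. by move=> fF xf; apply/bigcupP; exists f. Qed.

Section DualConnected.
Variables (V : finType) (F : {set {set V}}).
Hypothesis facet3 : forall f, f \in F -> #|f| = 3.
Hypothesis link_connected : forall v x y, x \in link_verts F v -> y \in link_verts F v ->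
  connect (link_rel F v) x y.

Definition dual_rel : rel {set V} := fun f g => [&& f \in F, g \in F & adjM F f g].

Definition star_rel (v : V) : rel {set V} := fun f g => dual_rel f g && (v \in g).

Lemma dual_rel_sym : symmetric dual_rel.
Proof. by move=> f g; rewrite /dual_rel adjM_sym andbCA. Qed.

Lemma star_connect_common_edge v x f g : f \in F -> g \in F -> x != v ->
  v \in f -> x \in f -> v \in g -> x \in g -> connect (star_rel v) f g.
Proof.
move=> fF gF xv vf xf vg xg.
have [-> | fg] := adjM_common_pair facet3 fF gF xv xf vf xg vg; first exact: connect0.
by apply: connect1; rewrite /star_rel /dual_rel fF gF fg vg.
Qed.

(* Walk along the link of [v]: a link edge [zw] is a facet through both [vz] and [vw]. *)
Lemma star_connect v f g : f \in F -> g \in F -> v \in f -> v \in g ->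
  connect (star_rel v) f g.
Proof.
move=> fF gF vf vg.
have [x xf xv] := exists_other v (ltac:(by rewrite facet3) : 1 < #|f|).
have [y yg yv] := exists_other v (ltac:(by rewrite facet3) : 1 < #|g|).
have link_of h z : h \in F -> v \in h -> z \in h -> z != v -> z \in link_verts F v.
  by move=> hF vh zh zv; rewrite inE zv; apply/existsP; exists h; rewrite hF vh zh.
pose P z := z != v /\ forall h, h \in F -> v \in h -> z \in h -> connect (star_rel v) f h.
suff [_] : P y by apply.
apply: (connect_invariant _ _ (link_connected (link_of f x fF vf xf xv) (link_of g y gF vg yg yv))).
  by split=> // h hF vh xh; apply: star_connect_common_edge xv vf xf vh xh.
move=> z w [zv Pz] vzwF; have [vz zw vw] := card3_distinct (facet3 vzwF).
split=> [|h hF vh wh]; first by rewrite eq_sym.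
apply: connect_trans (Pz _ vzwF _ _) _; rewrite ?inE ?eqxx ?orbT //.
by apply: (star_connect_common_edge _ hF (_ : w != v)); rewrite 1?eq_sym ?inE ?eqxx ?orbT.
Qed.

Hypothesis sc : sc_connected F.

Lemma dual_connect f g : f \in F -> g \in F -> connect dual_rel f g.
Proof.
move=> fF gF.
have star_dual v : subrel (connect (star_rel v)) (connect dual_rel).
  by apply: connect_sub => x y /andP[xy _]; apply: connect1.
have [u uf] : exists u, u \in f by apply/set0Pn; rewrite -card_gt0 facet3.
have [w wg] : exists w, w \in g by apply/set0Pn; rewrite -card_gt0 facet3.
pose P z := forall h, h \in F -> z \in h -> connect dual_rel f h.
suff : P w by apply.
apply: (connect_invariant _ _ (sc (mem_verts fF uf) (mem_verts gF wg))).
  by move=> h hF uh; apply: star_dual (star_connect fF hF uf uh).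
move=> z z' Pz /existsP[m /and3P[mF zm z'm]] h hF z'h.
exact: connect_trans (Pz _ mF zm) (star_dual _ _ _ (star_connect mF hF z'm z'h)).
Qed.

End DualConnected.

(** * Rooted spanning trees *)

Definition tree_adj (T : finType) (A : {set {set T}}) : rel T := fun x y => [set x; y] \in A.

Lemma tree_adj_sym (T : finType) (A : {set {set T}}) : symmetric (tree_adj A).
Proof. by move=> x y; rewrite /tree_adj setUC. Qed.

(* [p] is the parent map of a tree on [X] rooted at [r] whose arcs are [H]-edges; the rank
   [rk], decreasing towards the root, rules out cycles. *)
Definition rooted_parent (T : finType) (X : {set T}) (H : rel T) (r : T) (p : T -> T)
    (rk : T -> nat) : Prop :=
  p r = r /\ forall x, x \in X -> x != r -> [/\ p x \in X, H x (p x) & rk (p x) < rk x].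

Section RootedTree.
Variables (T : finType) (X : {set T}).

Lemma exists_rooted_parent (H : rel T) r : r \in X ->
  (forall y, y \in X -> connect H r y) -> (forall a b, a \in X -> H a b -> b \in X) ->
  symmetric H -> exists p rk, rooted_parent X H r p rk.
Proof.
move=> rX conn closed Hsym.
apply: (connected_set_ind (P := fun S => exists p rk, rooted_parent S H r p rk) rX conn closed).
  by exists id, (fun _ => 0); split=> // x /set1P ->; rewrite eqxx.
move=> S a b _ rS aS _ bS Hab [p [rk [pr Hp]]].
have notS x : x \in S -> x != b by move=> xS; apply: contraNneq bS => <-.
exists (fun x => if x == b then a else p x), (fun x => if x == b then (rk a).+1 else rk x).
split=> [|x /setU1P[-> _ | xS xr]]; first by rewrite (negbTE (notS r rS)).
  by rewrite eqxx (negbTE (notS a aS)) setU1r // -Hsym Hab.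
have [pxS Hx rkx] := Hp x xS xr.
by rewrite (negbTE (notS x xS)) (negbTE (notS _ pxS)) setU1r.
Qed.

Variables (H : rel T) (r : T) (p : T -> T) (rk : T -> nat).
Hypothesis Hp : rooted_parent X H r p rk.

Lemma parent_in x : x \in X -> p x \in X.
Proof. by case: (eqVneq x r) => [-> | xr xX]; [rewrite Hp.1 | case: (Hp.2 x xX xr)]. Qed.

Lemma parent_rel x : x \in X -> x != r -> H x (p x).
Proof. by move=> xX xr; case: (Hp.2 x xX xr). Qed.

Lemma rank_parent x : x \in X -> x != r -> rk (p x) < rk x.
Proof. by move=> xX xr; case: (Hp.2 x xX xr). Qed.

Lemma parent_neq x : x \in X -> x != r -> x != p x.
Proof. by move=> xX xr; apply: contraTneq (rank_parent xX xr) => <-; rewrite ltnn. Qed.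

Definition parent_tree : {set {set T}} := [set [set x; p x] | x in X :\ r].

Lemma parent_tree_adjP x y : tree_adj parent_tree x y ->
  [/\ x \in X, x != r & y = p x] \/ [/\ y \in X, y != r & x = p y].
Proof.
case/imsetP=> z /setD1P[zr zX] /set2_eq_cases /(_ (parent_neq zX zr)).
by case=> -[-> ->]; [left | right].
Qed.

Lemma parent_tree_adj x : x \in X -> x != r -> tree_adj parent_tree x (p x).
Proof. by move=> xX xr; apply/imsetP; exists x; rewrite // !inE xr. Qed.

Lemma parent_tree_connect_root x : x \in X -> connect (tree_adj parent_tree) x r.
Proof.
elim/(@measure_ind _ rk): x => x IH xX; have [-> | xr] := eqVneq x r; first exact: connect0.
apply: connect_trans (connect1 (parent_tree_adj xX xr)) _.
exact: IH (rank_parent xX xr) (parent_in xX).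
Qed.

Lemma card_parent_tree : r \in X -> #|parent_tree| = #|X| - 1.
Proof.
move=> rX; rewrite card_in_imset; first by rewrite (cardsD1 r X) rX add1n subn1.
move=> x y /setD1P[xr xX] /setD1P[yr yX] /set2_eq_cases /(_ (parent_neq yX yr)).
case=> [[-> //] | [xpy ypx]].
have := rank_parent xX xr; have := rank_parent yX yr; rewrite ypx -xpy.
by move=> /ltn_trans/[apply]; rewrite ltnn.
Qed.

Lemma fconnect_root y : fconnect p r y -> y = r.
Proof. by apply: (connect_invariant (P := eq^~ r)) => // u _ -> /eqP <-; exact: Hp.1. Qed.

Lemma exists_root_child x : x \in X -> x != r ->
  exists v, [/\ v \in X, v != r, p v = r & fconnect p x v].
Proof.
elim/(@measure_ind _ rk): x => x IH xX xr.
have [pxr | pxr] := eqVneq (p x) r; first by exists x; split=> //; apply: connect0.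
have [v [vX vr pv pxv]] := IH _ (rank_parent xX xr) (parent_in xX) pxr.
by exists v; split=> //; apply: connect_trans pxv; apply: fconnect1.
Qed.

End RootedTree.

Lemma parent_tree_spanning (V : finType) (F : {set {set V}}) H r p rk :
  rooted_parent F H r p rk -> r \in F -> (forall f g, f \in F -> H f g -> adjM F f g) ->
  spanning_tree F (parent_tree F r p).
Proof.
move=> Hp rF Hadj; split; last exact: card_parent_tree Hp rF.
  move=> _ /imsetP[f /setD1P[fr fF] ->].
  by exists f, (p f); split; rewrite ?(parent_in Hp) ?Hadj ?(parent_rel Hp).
move=> f g fF gF; change (connect (tree_adj (parent_tree F r p)) f g).
apply: connect_trans (parent_tree_connect_root Hp fF) _.
by rewrite (sym_connect_sym (@tree_adj_sym _ _)) (parent_tree_connect_root Hp gF).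
Qed.

(** * Unfoldings and checkered colourings *)

Definition checkered_colouring (V : finType) (F : {set {set V}}) (adj : rel {set V})
    (c : {set V} -> bool) : Prop :=
  (forall f g, f \in F -> g \in F -> adj f g -> c f != c g) /\
  (forall f, f \in F -> c f -> #|[set g in F | adj f g]| = 3).

Lemma colouring_black_of_deg_le2 (V : finType) (F : {set {set V}}) adj c x :
  checkered_colouring F adj c -> x \in F -> #|[set g in F | adj x g]| <= 2 -> c x = false.
Proof.
case=> _ white3 xF le2; apply/negbTE/negP => /(white3 x xF) deg3.
by rewrite deg3 in le2.
Qed.

Lemma checkered_ext (V : finType) (F : {set {set V}}) (adj adj' : rel {set V}) :
  {in F &, adj =2 adj'} -> checkered F adj -> checkered F adj'.
Proof.
move=> E [c [proper white3]]; exists c; split=> [f g fF gF | f fF cf].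
  by rewrite -E //; apply: proper.
rewrite -(white3 f fF cf); apply: eq_card => g; rewrite !inE.
by case gF: (g \in F); rewrite //= E.
Qed.

Section Unfolding.
Variables (V : finType) (F : {set {set V}}).
Hypothesis facet_deg_le2 : forall e : {set V}, #|e| = 2 -> facet_deg F e <= 2.
Variable A : {set {set {set V}}}.
Hypothesis arcs_dual : forall B, B \in A ->
  exists f g, [/\ f \in F, g \in F, adjM F f g & B = [set f; g]].

Lemma arc_adjM f g : tree_adj A f g -> [/\ f \in F, g \in F, f != g & adjM F f g].
Proof.
move=> /arcs_dual[x [y [xF yF xy]]] /set2_eq_cases /(_ (proj1 (andP xy))).
have yx : adjM F y x by rewrite adjM_sym.
by case=> -[-> ->]; split=> //; [case/andP: xy | case/andP: yx].
Qed.

(* A gluing chain from the copy of [e] in [f] only visits [f] and its [A]-neighbour on [e],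
   because no third facet contains [e]. *)
Lemma unf_share_tree_adj f g : f \in F -> unf_share A f g = tree_adj A f g.
Proof.
move=> fF; apply/idP/idP.
  case/andP=> fg /existsP[e /existsP[e' /and5P[/eqP e2 _ ef _ glued]]].
  pose P (q : {set V} * {set V}) := q.2 = e /\ (q.1 = f \/ tree_adj A f q.1).
  suff [_ /= [gf | //]] : P (g, e') by rewrite gf eqxx in fg.
  apply: (connect_invariant _ _ glued); first by split=> //; left.
  move=> [x _] [y _] [/= -> Px] /and4P[/= /eqP <- Axy ex ey].
  split=> //; have [xF yF xy _] := arc_adjM Axy.
  case: Px => [xf | Afx]; first by right; rewrite -xf.
  have [_ _ fx _] := arc_adjM Afx.
  have [-> | yf] := eqVneq y f; [by left | exfalso].
  have := facets_on_edge_eq facet_deg_le2 e2 fF xF yF ef ex ey fx xy.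
  by move/eqP; rewrite eq_sym (negbTE yf).
move=> Afg; have [_ gF fg /andP[_ fg2]] := arc_adjM Afg.
rewrite /unf_share fg; apply/existsP; exists (f :&: g); apply/existsP; exists (f :&: g).
rewrite fg2 subsetIl subsetIr; apply: connect1.
by apply/and4P; split; rewrite /= ?eqxx ?subsetIl ?subsetIr.
Qed.

Lemma unf_checkeredE : checkered F (unf_share A) <-> checkered F (tree_adj A).
Proof. by split; apply: checkered_ext => f g fF _; rewrite unf_share_tree_adj. Qed.

End Unfolding.

(** * Exchanging a tree arc *)

Section Exchange.
Variables (V : finType) (F : {set {set V}}).
Hypothesis facet3 : forall f, f \in F -> #|f| = 3.
Hypothesis facet_deg_le2 : forall e : {set V}, #|e| = 2 -> facet_deg F e <= 2.
Variables (a b : {set V}) (p : {set V} -> {set V}) (rk : {set V} -> nat).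
Hypotheses (Hp : rooted_parent F (adjM F) a p rk) (aF : a \in F) (bF : b \in F).
Hypotheses (ab : adjM F a b) (pb : p b != a).

Let T := parent_tree F a p.

Lemma tree_adj_adjM x y : tree_adj T x y -> adjM F x y.
Proof.
case/(parent_tree_adjP Hp) => -[xF xa ->]; last rewrite adjM_sym.
all: by apply: (parent_rel Hp).
Qed.

Lemma tree_not_adj_ab : ~~ tree_adj T a b.
Proof.
by apply/negP => /(parent_tree_adjP Hp) [[_ /eqP] | [_ _ /eqP]]; rewrite // eq_sym (negbTE pb).
Qed.

Lemma tree_adj_parent x : x \in F -> x != a -> tree_adj T x (p x).
Proof. exact: parent_tree_adj. Qed.

Section Subtree.
Variable v : {set V}.
Hypotheses (vF : v \in F) (va : v != a) (pv : p v = a) (bv : fconnect p b v).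

Let D := [set x in F | fconnect p x v].

Lemma subtree_parent x : x \in D -> x != v -> p x \in D.
Proof.
rewrite !inE => /andP[xF xv] nxv; rewrite (parent_in Hp xF) /=.
by move: xv; rewrite fconnect_eqVf (negbTE nxv).
Qed.

Lemma subtree_child x : x \in F -> p x \in D -> x \in D.
Proof. by rewrite !inE => xF /andP[_ pxv]; rewrite xF (connect_trans (fconnect1 p x)). Qed.

Lemma root_notin_subtree : a \notin D.
Proof. by rewrite inE aF; apply/negP => /(fconnect_root Hp) /eqP; apply/negP. Qed.

Lemma subtree_neq_root x : x \in D -> x != a.
Proof. by move=> xD; apply: contraNneq root_notin_subtree => <-. Qed.

Lemma subtree_in x : x \in D -> x \in F.
Proof. by rewrite inE => /andP[]. Qed.

Lemma b_neq_v : b != v.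
Proof. by apply: contraNneq pb => ->; rewrite pv. Qed.

Lemma b_in_subtree : b \in D.
Proof. by rewrite inE bF. Qed.

Lemma tree_adj_child_root : tree_adj T v a.
Proof. by rewrite -[X in tree_adj _ _ X]pv; apply: tree_adj_parent. Qed.

Lemma subtree_deepest_leaf :
  exists2 l, l \in D & forall y, y \in F -> tree_adj T l y -> y = p l.
Proof.
have [l lD lmax] : exists2 l, l \in D & forall x, x \in D -> rk x <= rk l.
  by case: (arg_maxnP rk b_in_subtree) => l lD lmax; exists l.
exists l => // y yF /(parent_tree_adjP Hp) [[_ _ ->] // | [_ ya ly]].
have yD : y \in D by apply: subtree_child; rewrite // -ly.
by have := lmax y yD; rewrite ly leqNgt (rank_parent Hp yF ya).
Qed.

Lemma subtree_parity (c c' : {set V} -> bool) :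
  (forall x, x \in D -> x != v -> c x != c (p x)) ->
  (forall x, x \in D -> x != v -> c' x != c' (p x)) ->
  forall x, x \in D -> c' x (+) c x = c' v (+) c v.
Proof.
move=> proper proper' x; elim/(@measure_ind _ rk): x => x IH xD.
have [-> // | xv] := eqVneq x v.
rewrite -(IH (p x)) ?(rank_parent Hp (subtree_in xD) (subtree_neq_root xD)) ?subtree_parent //.
move: (proper x xD xv) (proper' x xD xv).
by case: (c x); case: (c (p x)); case: (c' x); case: (c' (p x)).
Qed.

Let T' := [set a; b] |: (T :\ [set v; a]).

Lemma exchange_adjP x y : tree_adj T' x y ->
  [set x; y] = [set a; b] \/ tree_adj T x y /\ [set x; y] != [set v; a].
Proof. by rewrite /tree_adj !inE => /orP[/eqP | /andP[]]; [left | right]. Qed.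

Lemma exchange_adj_parent x : x \in F -> x != a -> x != v -> tree_adj T' x (p x).
Proof.
move=> xF xa xv; have := tree_adj_parent xF xa; rewrite /tree_adj !inE => -> /[!andbT].
apply/orP; right; apply: contra_neq xv => /set2_eq_cases /(_ va) [[] | [xa']] //.
by rewrite xa' eqxx in xa.
Qed.

Lemma exchange_connect_v x : x \in D -> connect (tree_adj T') x v.
Proof.
elim/(@measure_ind _ rk): x => x IH xD; have [-> | xv] := eqVneq x v; first exact: connect0.
have [xF xa] := (subtree_in xD, subtree_neq_root xD).
apply: connect_trans (connect1 (exchange_adj_parent xF xa xv)) _.
exact: IH (rank_parent Hp xF xa) (subtree_parent xD xv).
Qed.

Lemma exchange_connect_root x : x \in F -> connect (tree_adj T') x a.
Proof.
elim/(@measure_ind _ rk): x => x IH xF; have [-> | xa] := eqVneq x a; first exact: connect0.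
have [xD | xD] := boolP (x \in D).
  have v_b : connect (tree_adj T') v b.
    by rewrite (sym_connect_sym (@tree_adj_sym _ _)) exchange_connect_v ?b_in_subtree.
  apply: connect_trans (exchange_connect_v xD) (connect_trans v_b (connect1 _)).
  by rewrite /tree_adj setUC setU11.
have xv : x != v by apply: contraNneq xD => ->; rewrite inE vF connect0.
apply: connect_trans (connect1 (exchange_adj_parent xF xa xv)) _.
exact: IH (rank_parent Hp xF xa) (parent_in Hp xF).
Qed.

Lemma exchange_adj_adjM x y : tree_adj T' x y -> adjM F x y.
Proof.
case/exchange_adjP => [/set2_eq_cases /(_ (proj1 (andP ab))) | [/tree_adj_adjM //]].
by case=> -[-> ->]; rewrite // adjM_sym.
Qed.

Lemma exchange_spanning : spanning_tree F T'.
Proof.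
have [arcsT _ cardT] := parent_tree_spanning Hp aF (fun _ _ _ => id).
split=> [B /setU1P[-> | /setD1P[_ /arcsT //]] | f g fF gF | ]; first by exists a, b.
  change (connect (tree_adj T') f g); apply: connect_trans (exchange_connect_root fF) _.
  by rewrite (sym_connect_sym (@tree_adj_sym _ _)) exchange_connect_root.
have va_in_T : [set v; a] \in T by rewrite -[X in [set v; X]]pv; apply: tree_adj_parent.
have abT : ([set a; b] \in T) = false := negbTE tree_not_adj_ab.
rewrite cardsU1 !inE abT andbF -cardT (cardsD1 [set v; a] T) va_in_T.
by rewrite add1n.
Qed.

Lemma colouring_parent_proper (A : {set {set {set V}}}) d :
  checkered_colouring F (tree_adj A) d ->
  (forall x, x \in F -> x != a -> x != v -> tree_adj A x (p x)) ->
  forall x, x \in D -> x != v -> d x != d (p x).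
Proof.
case=> proper _ parent_adj x xD xv; have [xF xa] := (subtree_in xD, subtree_neq_root xD).
exact: proper _ _ xF (parent_in Hp xF) (parent_adj x xF xa xv).
Qed.

Section Leaf.
Variable l : {set V}.
Hypotheses (lD : l \in D) (leaf : forall y, y \in F -> tree_adj T l y -> y = p l).

Let lF : l \in F := subtree_in lD.

Lemma tree_colouring_child_leaf c : checkered_colouring F (tree_adj T) c -> c v && ~~ c l.
Proof.
move=> col; have ca : c a = false.
  apply: colouring_black_of_deg_le2 col aF _.
  exact (card_adj_le2 facet3 facet_deg_le2 aF (@tree_adj_adjM a) bF ab tree_not_adj_ab).
have cv : c v by move: (col.1 v a vF aF tree_adj_child_root); rewrite ca; case: (c v).
rewrite cv (colouring_black_of_deg_le2 col lF) //.
apply: leq_trans (subset_leq_card _) (_ : #|[set p l]| <= 2); last by rewrite cards1.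
by apply/subsetP => y; rewrite !inE => /andP[yF /(leaf yF) ->].
Qed.

(* In [T'] the child [v] has lost its arc to [a], and the leaf [l] gained at most the arc to
   [a]: both have at most two neighbours. *)
Lemma exchange_colouring_child_leaf c : checkered_colouring F (tree_adj T') c -> ~~ c v && ~~ c l.
Proof.
move=> col; have ab' := proj1 (andP ab).
rewrite (colouring_black_of_deg_le2 col vF) ?(colouring_black_of_deg_le2 col lF) //.
  apply: leq_trans (subset_leq_card _) (_ : #|[set p l; a]| <= 2); last first.
    by rewrite cards2; case: (_ != _).
  apply/subsetP => y; rewrite !inE => /andP[yF /exchange_adjP [| [/(leaf yF) -> _]]].
    move/set2_eq_cases/(_ ab') => [[la _] | [_ ->]]; last by rewrite eqxx orbT.
    by move: (subtree_neq_root lD); rewrite la eqxx.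
  by rewrite eqxx.
have va_adj := tree_adj_adjM tree_adj_child_root.
apply: (card_adj_le2 facet3 facet_deg_le2 vF (@exchange_adj_adjM v) aF va_adj).
apply/negP => /exchange_adjP [/set2_eq_cases /(_ ab') [[/eqP] | [vb _]] | [_ /eqP //]].
  by rewrite (negbTE va).
by move: b_neq_v; rewrite vb eqxx.
Qed.

(* Along the tree path from [l] to [v] both colourings alternate, so they differ at [l]
   iff they differ at [v]; but they agree at [l] and disagree at [v]. *)
Lemma exchange_not_both_checkered : ~ (checkered F (tree_adj T) /\ checkered F (tree_adj T')).
Proof.
case=> -[c col] [c' col'].
have := subtree_parity (colouring_parent_proper col (fun x xF xa _ => tree_adj_parent xF xa))
  (colouring_parent_proper col' exchange_adj_parent) lD.
case/andP: (tree_colouring_child_leaf col) => -> /negbTE ->.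
by case/andP: (exchange_colouring_child_leaf col') => /negbTE -> /negbTE ->.
Qed.

End Leaf.

End Subtree.

Lemma exists_spanning_tree_not_checkered :
  exists A, spanning_tree F A /\ ~ checkered F (tree_adj A).
Proof.
have ba : b != a by rewrite eq_sym; case/andP: ab.
have [v [vF va pv bv]] := exists_root_child Hp bF ba.
have [chk | nchk] := classic (checkered F (tree_adj T)).
  exists ([set a; b] |: (T :\ [set v; a])); split; first exact: exchange_spanning.
  have [l lD leaf] := subtree_deepest_leaf bv.
  by move=> chk'; apply: (exchange_not_both_checkered vF va pv lD leaf).
by exists T; split=> //; apply: parent_tree_spanning Hp aF (fun _ _ _ => id).
Qed.

End Exchange.

(** * Tree-like weak duals *)

Lemma card_bigcup_connected_le (V : finType) (X : {set {set V}}) (R : rel {set V}) x0 :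
  (forall f, f \in X -> #|f| = 3) -> x0 \in X ->
  (forall y, y \in X -> connect R x0 y) -> (forall a b, a \in X -> R a b -> b \in X) ->
  (forall a b, R a b -> #|a :&: b| = 2) ->
  #|\bigcup_(f in X) f| <= #|X| + 2.
Proof.
move=> X3 x0X conn closed R2.
apply: (connected_set_ind (P := fun S => #|\bigcup_(f in S) f| <= #|S| + 2) x0X conn closed).
  by rewrite big_set1 cards1 X3.
move=> S a b SX _ aS bX bS Rab IH.
have shared : #|b :&: a| <= #|b :&: \bigcup_(f in S) f| by apply/subset_leq_card/setIS/bigcup_sup.
rewrite setIC R2 // in shared.
have grow1 : #|b :|: \bigcup_(f in S) f| <= #|\bigcup_(f in S) f|.+1.
  by have := cardsUI b (\bigcup_(f in S) f); rewrite (X3 b bX); lia.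
rewrite big_setU1 //= cardsU1 bS; apply: leq_trans grow1 _; lia.
Qed.

Definition interior_edges (V : finType) (F : {set {set V}}) : {set {set V}} :=
  [set e in edges F | facet_deg F e == 2].

Section Polygon.
Variables (V : finType) (F : {set {set V}}).
Hypothesis facet3 : forall f, f \in F -> #|f| = 3.
Hypothesis facet_deg_le2 : forall e : {set V}, #|e| = 2 -> facet_deg F e <= 2.

(* The interior edges are in bijection with the dual arcs, via [e |-> facets on e]. *)
Lemma card_interior_edges (A : {set {set {set V}}}) : spanning_tree F A ->
  (forall f g, f \in F -> g \in F -> adjM F f g -> [set f; g] \in A) ->
  #|interior_edges F| = #|F| - 1.
Proof.
case=> arcs _ <- all_arcs; pose star (e : {set V}) := [set f in F | e \subset f].
have interiorP e : e \in interior_edges F -> exists f g,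
    [/\ f \in F, g \in F, adjM F f g, e = f :&: g & star e = [set f; g]].
  rewrite !inE => /andP[/andP[/eqP e2 _] /cards2P[f [g [fg star_e]]]].
  have /andP[fF ef] : (f \in F) && (e \subset f) by move: (set21 f g); rewrite -star_e inE.
  have /andP[gF eg] : (g \in F) && (e \subset g) by move: (set22 f g); rewrite -star_e inE.
  have fg2 : #|f :&: g| = 2.
    apply/eqP; rewrite eqn_leq (card_facetI_le2 facet3 fF gF fg) -{1}e2 subset_leq_card //.
    by rewrite subsetI ef eg.
  exists f, g; split; rewrite /adjM ?fg ?fg2 //.
  by apply/eqP; rewrite eqEcard subsetI ef eg fg2 e2.
rewrite -(@card_in_imset _ _ star); last first.
  move=> e e' /interiorP[f [g [_ _ _ -> ->]]] /interiorP[f' [g' [_ _ /andP[fg' _] -> ->]]].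
  by case/set2_eq_cases/(_ fg') => -[-> ->]; rewrite // setIC.
suff -> : star @: interior_edges F = A by [].
apply/setP => B; apply/imsetP/idP => [[e /interiorP[f [g [fF gF fg _ ->]]] ->] | BA].
  exact: all_arcs.
have [f [g [fF gF /andP[fg /eqP fg2] ->]]] := arcs B BA.
have star_fg : star (f :&: g) = [set f; g].
  apply/eqP; rewrite eq_sym eqEcard cards2 fg (facet_deg_le2 fg2) andbT.
  by rewrite subUset !sub1set !inE fF gF subsetIl subsetIr.
exists (f :&: g); last by rewrite star_fg.
rewrite !inE fg2 /facet_deg -/(star _) star_fg cards2 fg andbT /=.
by apply/exists_inP; exists f; rewrite ?subsetIl.
Qed.

Lemma facet_edges f : f \in F ->
  [set e in edges F | e \subset f] = [set e : {set V} | e \subset f & #|e| == 2].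
Proof.
move=> fF; apply/setP => e; rewrite inE [in RHS]inE.
apply/andP/andP => [[/edgesP[e2 _] ef] | [ef /eqP e2]]; first by rewrite ef e2.
by split=> //; apply/edgesP; split=> //; exists f.
Qed.

Lemma sum_facet_deg : \sum_(e in edges F) facet_deg F e = 3 * #|F|.
Proof.
rewrite /facet_deg -(double_count F (edges F) (fun f e => e \subset f)).
rewrite (eq_bigr (fun _ => 3)) ?sum_nat_const 1?mulnC // => f fF.
by rewrite facet_edges // cards_draws facet3.
Qed.

Lemma sum_facet_deg_split : \sum_(e in edges F) facet_deg F e = #|edges F| + #|interior_edges F|.
Proof.
transitivity (\sum_(e in edges F) (1 + (facet_deg F e == 2))).
  apply: eq_bigr => e eE; have := facet_deg_gt0 eE; case/edgesP: eE => /facet_deg_le2.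
  by case: (facet_deg F e) => [|[|[|]]].
rewrite big_split /= sum1_card; congr (_ + _).
rewrite -sum1dep_card big_mkcondr /=.
by apply: eq_bigr => e _; case: (_ == 2).
Qed.

Hypothesis link_connected : forall v x y, x \in link_verts F v -> y \in link_verts F v ->
  connect (link_rel F v) x y.
Hypothesis sc : sc_connected F.
Hypothesis F_neq0 : F != set0.
Hypothesis interior_card : #|interior_edges F| = #|F| - 1.

Lemma card_verts_le : #|verts F| <= #|F| + 2.
Proof.
have [f0 f0F] := set0Pn _ F_neq0.
apply: (card_bigcup_connected_le (R := dual_rel F) facet3 f0F).
- by move=> g gF; apply: dual_connect.
- by move=> f g _ /and3P[].
- by move=> f g /and3P[_ _ /andP[_ /eqP]].
Qed.

Definition star_facets (v : V) : {set {set V}} := [set f in F | v \in f].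
Definition star_edges (v : V) : {set {set V}} := [set e in edges F | v \in e].

(* The facets around [v] form a strip; each new facet adds at most one vertex. *)
Lemma card_star_edges_le v : v \in verts F -> #|star_edges v| <= #|star_facets v| + 1.
Proof.
case/bigcupP=> f0 f0F vf0.
have f0v : f0 \in star_facets v by rewrite inE f0F.
set U := \bigcup_(f in star_facets v) f.
have cardU : #|U| <= #|star_facets v| + 2.
  apply: (card_bigcup_connected_le (R := star_rel F v) _ f0v).
  - by move=> f /[!inE] /andP[fF _]; apply: facet3.
  - by move=> g /[!inE] /andP[gF vg]; apply: star_connect.
  - by move=> f g _ /andP[/and3P[_ gF _] vg]; rewrite inE gF.
  - by move=> f g /andP[/and3P[_ _ /andP[_ /eqP]]].
have vU : v \in U by apply/bigcupP; exists f0.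
have : #|star_edges v| <= #|U :\ v|.
  apply: leq_trans (leq_imset_card (fun x => [set v; x]) _); apply/subset_leq_card/subsetP.
  move=> e; rewrite inE => /andP[/edgesP[e2 [f fF ef]] ve].
  have [x xv e_vx] := card2_set2_of_mem e2 ve.
  subst e; apply/imsetP; exists x => //; rewrite !inE xv; apply/bigcupP; exists f.
    by rewrite inE fF (subsetP ef _ (set21 v x)).
  exact: (subsetP ef _ (set22 v x)).
by move/leq_trans; apply; move: cardU; rewrite (cardsD1 v U) vU; lia.
Qed.

Lemma sum_card_star_facets : \sum_(v in verts F) #|star_facets v| = 3 * #|F|.
Proof.
rewrite (double_count (verts F) F (fun v f => v \in f)).
rewrite (eq_bigr (fun _ => 3)) ?sum_nat_const 1?mulnC // => f fF.
rewrite -(facet3 fF); apply: eq_card => x; rewrite inE.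
by case xf: (x \in f); rewrite ?andbF ?andbT ?(mem_verts fF xf).
Qed.

Lemma sum_card_star_edges : \sum_(v in verts F) #|star_edges v| = 2 * #|edges F|.
Proof.
rewrite (double_count (verts F) (edges F) (fun v e => v \in e)).
rewrite (eq_bigr (fun _ => 2)) ?sum_nat_const 1?mulnC // => e /edgesP[e2 [f fF ef]].
rewrite -e2; apply: eq_card => x; rewrite inE.
by case xe: (x \in e); rewrite ?andbF ?andbT ?(mem_verts fF (subsetP ef _ xe)).
Qed.

(* [3 F = E + I = E + F - 1] gives [E = 2 F + 1]; then summing the star bound over the
   at most [F + 2] vertices gives [2 E <= 3 F + V <= 4 F + 2 = 2 E], so all bounds are tight. *)
Lemma euler_counts : [/\ #|verts F| = #|F| + 2, #|edges F| = 2 * #|F| + 1 &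
  forall v, v \in verts F -> #|star_edges v| = #|star_facets v| + 1].
Proof.
have F_gt0 : 0 < #|F| by rewrite card_gt0.
have cardE : #|edges F| = 2 * #|F| + 1.
  by move: sum_facet_deg; rewrite sum_facet_deg_split interior_card; lia.
have star_sum : \sum_(v in verts F) (#|star_facets v| + 1) = 3 * #|F| + #|verts F|.
  by rewrite big_split /= sum1_card sum_card_star_facets.
have le_sum := leqif_sum (fun v (vV : v \in verts F) => leqif_eq (card_star_edges_le vV)).
have cardV : #|verts F| = #|F| + 2.
  by move: le_sum.1 card_verts_le; rewrite sum_card_star_edges star_sum cardE; lia.
have tight : \sum_(v in verts F) #|star_edges v| == \sum_(v in verts F) (#|star_facets v| + 1).
  by rewrite sum_card_star_edges star_sum cardE cardV; apply/eqP; lia.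
by split=> // v vV; move: le_sum.2; rewrite tight => /esym/forall_inP/(_ v vV)/eqP.
Qed.

Lemma card_star_edges_in_facet v f : f \in F -> v \in f ->
  #|[set e in star_edges v | e \subset f]| = 2.
Proof.
move=> fF vf; have -> : [set e in star_edges v | e \subset f] = [set [set v; x] | x in f :\ v].
  apply/setP => e; apply/idP/imsetP => [| [x /setD1P[xv xf] ->]].
    rewrite inE andbC inE => /and3P[ef /edgesP[e2 _] ve].
    have [x xv e_vx] := card2_set2_of_mem e2 ve.
    by exists x => //; rewrite !inE xv (subsetP ef) // e_vx set22.
  have vx_f : [set v; x] \subset f by rewrite subUset !sub1set vf xf.
  rewrite inE andbC inE vx_f set21 andbT; apply/edgesP; split; last by exists f.
  by rewrite cards2 eq_sym xv.
rewrite card_in_imset; first by move: (facet3 fF); rewrite (cardsD1 v) vf => -[].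
move=> x y /setD1P[xv _] _ /setP/(_ x); rewrite !inE eqxx orbT (negbTE xv) /=.
by move/esym/eqP.
Qed.

(* Around an interior vertex every edge bounds two facets and every facet has two edges
   at [v], so stars would have as many edges as facets. *)
Lemma vertex_on_boundary v : v \in verts F -> exists2 e, boundary_edge F e & v \in e.
Proof.
move=> vV; have [/exists_inP[e] | /exists_inPn interior] :=
  boolP [exists e in star_edges v, facet_deg F e == 1].
  by rewrite inE => /andP[eE ve] deg1; exists e; rewrite // /boundary_edge eE.
exfalso; have := double_count (star_edges v) (star_facets v) (fun e f => e \subset f).
rewrite (eq_bigr (fun _ => 2)) => [| e ev]; last first.
  have := ev; rewrite inE => /andP[eE ve]; have := interior e ev.
  have -> : [set y in star_facets v | e \subset y] = [set f in F | e \subset f].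
    apply/setP => f; rewrite !inE; case ef: (e \subset f); rewrite ?andbF ?andbT //.
    by rewrite (subsetP ef) ?andbT.
  rewrite -/(facet_deg F e); have := facet_deg_gt0 eE; case/edgesP: eE => /facet_deg_le2.
  by case: (facet_deg F e) => [|[|[|]]].
rewrite [RHS](eq_bigr (fun _ => 2)) => [| f /[!inE] /andP[fF vf]].
  by rewrite !sum_nat_const; have [_ _ /(_ v vV) ->] := euler_counts; lia.
exact: card_star_edges_in_facet.
Qed.

End Polygon.

Lemma polygon_of_card_interior_edges (V : finType) (F : {set {set V}}) :
  simplicial_2manifold F -> sc_connected F -> #|interior_edges F| = #|F| - 1 ->
  polygon_triangulation F.
Proof.
move=> M sc interior_card; have [F_neq0 facet3 deg_le2 link_conn] := M.
have [cardV cardE _] := euler_counts facet3 deg_le2 link_conn sc F_neq0 interior_card.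
by split=> //; [exact: vertex_on_boundary | rewrite cardV cardE; lia].
Qed.

Section SpanningTrees.
Variables (V : finType) (F : {set {set V}}).
Hypothesis M : simplicial_2manifold F.

Lemma exists_spanning_tree : sc_connected F -> exists A, spanning_tree F A.
Proof.
move=> sc; have [F_neq0 facet3 _ link_conn] := M; have [r rF] := set0Pn _ F_neq0.
have closed f g : f \in F -> dual_rel F f g -> g \in F by move=> _ /and3P[].
have [p [rk Hp]] := exists_rooted_parent rF
  (fun g gF => dual_connect facet3 link_conn sc rF gF) closed (@dual_rel_sym _ F).
exists (parent_tree F r p); apply: (parent_tree_spanning Hp rF).
by move=> f g _ /and3P[].
Qed.

Lemma spanning_tree_exchange A a b : spanning_tree F A ->
  a \in F -> b \in F -> adjM F a b -> [set a; b] \notin A ->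
  exists A', spanning_tree F A' /\ ~ checkered F (tree_adj A').
Proof.
case: M => _ facet3 deg_le2 _ [arcs conn _] aF bF ab abA.
have closed f g : f \in F -> tree_adj A f g -> g \in F by move=> _ /(arc_adjM arcs)[].
have [q [rk Hq]] := exists_rooted_parent aF (fun g gF => conn a g aF gF) closed
  (@tree_adj_sym _ A).
have Hq_adjM : rooted_parent F (adjM F) a q rk.
  split=> [|x xF xa]; first exact: Hq.1.
  by have [qxF /(arc_adjM arcs)[_ _ _ adj] rkx] := Hq.2 x xF xa.
apply: (exists_spanning_tree_not_checkered facet3 deg_le2 Hq_adjM aF bF ab).
apply: contraNneq abA => qb; rewrite setUC -qb; apply: (parent_rel Hq) bF _.
by rewrite eq_sym; case/andP: ab.
Qed.

End SpanningTrees.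

Theorem mainTheorem8 (V : finType) (F : {set {set V}}) :
  simplicial_2manifold F -> sc_connected F ->
  ~ (polygon_triangulation F /\ checkered F (adjM F)) ->
  exists T : {set {set {set V}}},
    spanning_tree F T /\ ~ checkered F (unf_share T).
Proof.
move=> M sc not_checkered_polygon; have [_ facet3 deg_le2 _] := M.
suff [A [Aspan not_chk]] : exists A, spanning_tree F A /\ ~ checkered F (tree_adj A).
  by exists A; split; rewrite // unf_checkeredE //; case: Aspan.
have [A Aspan] := exists_spanning_tree M sc.
have [[a [b [aF bF ab abA]]] | all_arcs] :=
  classic (exists a b, [/\ a \in F, b \in F, adjM F a b & [set a; b] \notin A]).
  exact: spanning_tree_exchange Aspan aF bF ab abA.
have arcsA f g : f \in F -> g \in F -> adjM F f g -> [set f; g] \in A.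
  by move=> fF gF fg; apply/negPn/negP => fgA; apply: all_arcs; exists f, g.
have [chk | ] := classic (checkered F (tree_adj A)); last by exists A.
case: not_checkered_polygon; split.
  exact: polygon_of_card_interior_edges M sc (card_interior_edges facet3 deg_le2 Aspan arcsA).
apply: checkered_ext chk => f g fF gF; apply/idP/idP; last exact: arcsA.
by case: Aspan => arcs _ _ /(arc_adjM arcs)[].
Qed.
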